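(* Let $M$ be a closed, oriented, triangulated surface and let $C\subset M$ be a simple closed curve which is a subcomplex of $M$ and separates $M$ into two compact subsurfaces $A_1$ and $A_2$ (subcomplexes) with $A_1\cap A_2=C$, where $A_1$ is homeomorphic to a closed oriented surface $M_1$ of genus $g_1$ with an open disk removed and $A_2$ is homeomorphic to a closed oriented surface $M_2$ of genus $g_2$ with an open disk removed (so $M=M_1\#_C M_2$). Let $f$ be a perfect discrete Morse function on $M$ with gradient vector field $V$ such that the critical vertex and exactly $2g_1$ of the critical edges of $f$ lie in $A_1$, and the critical $2$-cell and the remaining $2g_2$ critical edges lie in $A_2\setminus C$. Assume further that no arrow on $C$ points into $A_2$, i.e. every vertex and edge of $C$ is paired by $V$ either with a cell of $C$ or with a cell of $A_1$ not in $C$. Let $D_1$ and $D_2$ be disks triangulated as cones over $C$, so that $A_1\cup_C D_1\cong M_1$ and $A_2\cup_C D_2\cong M_2$. Then there exist perfect discrete Morse functions $f_1$ on $A_1\cup_C D_1$ and $f_2$ on $A_2\cup_C D_2$ such that $f_1$ agrees with $f$ on $A_1$, $f_2$ agrees with $f$ on $A_2$, and the gradient vector field of $f_i$ extends the restriction of $V$ to the pairs with both cells in $A_i$ ($i=1,2$).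
   Context: A discrete Morse function on a finite regular cell complex $K$ is a function $f$ from the set of cells to $\mathbb R$ such that for every $p$-cell $\sigma$, at most one $(p+1)$-coface $\tau$ satisfies $f(\tau)\le f(\sigma)$ and at most one $(p-1)$-face $\nu$ satisfies $f(\nu)\ge f(\sigma)$; a cell is critical if neither exception occurs. Its gradient vector field $V$ is the set of pairs $(\sigma,\tau)$ (''arrows'' from $\sigma$ to $\tau$), $\sigma$ a codimension-one face of $\tau$, with $f(\sigma)\ge f(\tau)$; each cell lies in at most one pair and the critical cells are those in no pair. $f$ is perfect if the number of critical $p$-cells equals $\operatorname{rank}H_p(K)$ for every $p$; for a closed oriented surface of genus $g$ this means one critical vertex, $2g$ critical edges and one critical $2$-cell. *)

From HB Require Import structures.
From mathcomp Require Import all_boot all_order all_algebra.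
Set Implicit Arguments. Unset Strict Implicit. Unset Printing Implicit Defensive.
Import Order.TTheory GRing.Theory Num.Theory.

Section Complexes.
Variable T : finType.
Implicit Types (K : {set {set T}}) (s t : {set T}).

Definition is_complex K :=
  (set0 \notin K) &&
  [forall s in K, forall t : {set T}, (t \subset s) && (t != set0) ==> (t \in K)].

Definition is_subcomplex (L K : {set {set T}}) := is_complex L && (L \subset K).

Definition cells K (p : nat) := [set s in K | #|s| == p.+1].

Definition is_facet s t := (s \subset t) && (#|t| == #|s|.+1).

Definition euler_char K : int :=
  (#|cells K 0|%:Z - #|cells K 1|%:Z + #|cells K 2|%:Z)%R.

Definition pure2 K :=
  forall s, s \in K -> (#|s| <= 3)%N /\ exists2 t, t \in cells K 2 & s \subset t.

Definition edges_in_two K :=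
  forall e, e \in cells K 1 -> #|[set t in cells K 2 | e \subset t]| = 2.

Definition adj K : rel T := fun u v => (u != v) && ([set u; v] \in K).
Definition connected_cx K :=
  forall u v, [set u] \in K -> [set v] \in K -> connect (adj K) u v.

Definition link_adj K (v : T) : rel T := fun u w => [set v; u; w] \in cells K 2.
Definition links_connected K :=
  forall v u w, [set v; u] \in cells K 1 -> [set v; w] \in cells K 1 ->
    connect (link_adj K v) u w.

Definition closed_surface K :=
  [/\ is_complex K, K != set0, pure2 K, edges_in_two K
    & links_connected K /\ connected_cx K].

(* coherent orientation: a cyclic order O t on each triangle t, such that
   triangles sharing an edge induce opposite orientations on it *)
Definition orientable K := exists O : {set T} -> T -> T,
  [/\ (forall t, t \in cells K 2 -> forall x, x \in t -> (O t x \in t) /\ (O t x != x)),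
      (forall t, t \in cells K 2 -> {in t &, injective (O t)})
    & (forall t t' u v, t \in cells K 2 -> t' \in cells K 2 -> t != t' ->
        u \in t -> v \in t -> u \in t' -> v \in t' -> O t u = v -> O t' v = u)].

Definition surface_of_genus K (g : nat) :=
  [/\ closed_surface K, orientable K & euler_char K = (2 - 2 * g%:Z)%R].

Definition simple_closed_curve K :=
  [/\ is_complex K, K != set0, (forall s, s \in K -> #|s| <= 2)%N,
      (forall v, [set v] \in K -> #|[set e in cells K 1 | v \in e]| = 2)
    & connected_cx K].

Variable R : realFieldType.
Implicit Types (f : {set T} -> R).

Definition discrete_morse K f :=
  forall s, s \in K ->
    (#|[set t in K | is_facet s t & (f t <= f s)%R]| <= 1)%N /\
    (#|[set t in K | is_facet t s & (f s <= f t)%R]| <= 1)%N.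

Definition critical K f s :=
  [&& s \in K,
      [forall t in K, is_facet s t ==> (f s < f t)%R] &
      [forall t in K, is_facet t s ==> (f t < f s)%R]].

Definition gradient K f : {set {set T} * {set T}} :=
  [set p | [&& p.1 \in K, p.2 \in K, is_facet p.1 p.2 & (f p.2 <= f p.1)%R]].

Definition ncrit K f (p : nat) := #|[set s | critical K f s & #|s| == p.+1]|.

(* perfect discrete Morse function on a closed oriented surface of genus g:
   ranks of homology are 1, 2g, 1 *)
Definition perfect_surface K (g : nat) f :=
  [/\ discrete_morse K f, ncrit K f 0 = 1%N, ncrit K f 1 = (2 * g)%N
    & ncrit K f 2 = 1%N].

End Complexes.

Definition lift_simplex (T : finType) (s : {set T}) : {set option T} :=
  [set Some x | x in s].

(* A ∪_C D, where D is the cone over C with apex None *)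
Definition cone_glue (T : finType) (A C : {set {set T}}) : {set {set option T}} :=
  [set lift_simplex s | s in A] :|: [set None |: lift_simplex s | s in C]
  :|: [set [set None]].

(* Both functions are [f] on the lifted cells of [A_i] and new values on the cone [D_i] over
   [C]; a lifted cell of [C] either keeps its [V]-partner or gets paired with its own cone.

   On [A_2], which no arrow of [C] points into, the cone over [s] gets the value [f s + ε] if
   the partner of [s] lies in [C] and [f s - ε] otherwise, [ε] being a third of the smallest gap
   of [f]. Pairs inside [C] are thereby copied onto the cone, a cell of [C] paired across into
   [A_1] is paired with its cone instead, and the apex, valued below everything, becomes the one
   new critical cell, standing in for the critical vertex of [f], which lies in [A_1].

   On [A_1] every cell of [C] is already paired inside [A_1], so the cone can be valued above
   [f] and treated on its own. Along a breadth-first spanning tree of [C] rooted at [r], the apex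
   is paired with the cone over [r] and the cone over any other vertex with the cone over its
   tree edge. As [C] is a cycle, exactly one edge is not a tree edge; the cone over it becomes the
   one new critical cell, standing in for the critical 2-cell of [f], which lies in [A_2]. *)

From HB Require Import structures.
From mathcomp Require Import all_boot all_order all_algebra.
From mathcomp Require Import lra zify.
Import Order.TTheory GRing.Theory Num.Theory.

Set Implicit Arguments. Unset Strict Implicit. Unset Printing Implicit Defensive.

(** * Gluing a cone along a subcomplex *)

Section ConeGlue.
Variable T : finType.
Implicit Types (s t : {set T}) (X Y : {set option T}) (A C : {set {set T}}).

Definition cone_simplex s : {set option T} := None |: lift_simplex s.
Definition unlift X : {set T} := [set x | Some x \in X].
(* [cone_simplex set0] is the apex. *)
Definition cone_base C := set0 |: C.

Lemma in_lift_simplex s x : (Some x \in lift_simplex s) = (x \in s).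
Proof. by rewrite (mem_imset _ _ (@Some_inj _)). Qed.

Lemma None_lift_simplexF s : (None \in lift_simplex s) = false.
Proof. by apply/imsetP => -[]. Qed.

Lemma None_cone_simplex s : None \in cone_simplex s.
Proof. exact: setU11. Qed.

Lemma unlift_lift s : unlift (lift_simplex s) = s.
Proof. by apply/setP => x; rewrite inE in_lift_simplex. Qed.

Lemma unlift_cone s : unlift (cone_simplex s) = s.
Proof. by apply/setP => x; rewrite !inE in_lift_simplex. Qed.

Lemma lift_simplex_inj : injective (@lift_simplex T).
Proof. by move=> s t /(congr1 unlift); rewrite !unlift_lift. Qed.

Lemma cone_simplex_inj : injective cone_simplex.
Proof. by move=> s t /(congr1 unlift); rewrite !unlift_cone. Qed.

Lemma lift_neq_cone s t : lift_simplex s != cone_simplex t.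
Proof.
by apply/eqP => /setP/(_ None); rewrite None_cone_simplex None_lift_simplexF.
Qed.

Lemma card_lift_simplex s : #|lift_simplex s| = #|s|.
Proof. exact/card_imset/Some_inj. Qed.

Lemma card_cone_simplex s : #|cone_simplex s| = #|s|.+1.
Proof. by rewrite cardsU1 None_lift_simplexF card_lift_simplex. Qed.

Lemma subset_option X Y :
  (X \subset Y) = ((None \in X) ==> (None \in Y)) && (unlift X \subset unlift Y).
Proof.
apply/subsetP/andP => [XY|[/implyP XYN /subsetP XY] [x|] //].
  by split; [apply/implyP/XY | apply/subsetP => x; rewrite !inE; apply: XY].
by move=> xX; have := XY x; rewrite !inE; apply.
Qed.

Lemma subset_lift s t : (lift_simplex s \subset lift_simplex t) = (s \subset t).
Proof. by rewrite subset_option None_lift_simplexF !unlift_lift. Qed.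

Lemma subset_cone s t : (cone_simplex s \subset cone_simplex t) = (s \subset t).
Proof. by rewrite subset_option !None_cone_simplex !unlift_cone. Qed.

Lemma subset_lift_cone s t : (lift_simplex s \subset cone_simplex t) = (s \subset t).
Proof. by rewrite subset_option None_lift_simplexF unlift_lift unlift_cone. Qed.

Lemma subset_cone_lift s t : (cone_simplex s \subset lift_simplex t) = false.
Proof. by rewrite subset_option None_cone_simplex None_lift_simplexF. Qed.

Lemma facet_lift s t : is_facet (lift_simplex s) (lift_simplex t) = is_facet s t.
Proof. by rewrite /is_facet subset_lift !card_lift_simplex. Qed.

Lemma facet_cone s t : is_facet (cone_simplex s) (cone_simplex t) = is_facet s t.
Proof. by rewrite /is_facet subset_cone !card_cone_simplex. Qed.

Lemma facet_cone_lift s t : is_facet (cone_simplex s) (lift_simplex t) = false.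
Proof. by rewrite /is_facet subset_cone_lift. Qed.

Lemma facet_lift_cone s t : is_facet (lift_simplex s) (cone_simplex t) = (s == t).
Proof.
rewrite /is_facet subset_lift_cone card_lift_simplex card_cone_simplex eqSS.
apply/andP/eqP => [[st /eqP ct]|->]; last by rewrite subxx.
by apply/eqP; rewrite eqEcard st ct leqnn.
Qed.

Lemma in_cone_base C s : (s \in cone_base C) = (s == set0) || (s \in C).
Proof. exact: in_setU1. Qed.

Lemma mem_cone_glue A C X : (X \in cone_glue A C) =
  (X \in (@lift_simplex T) @: A) || (X \in cone_simplex @: cone_base C).
Proof.
rewrite /cone_glue !inE -orbA imsetU1 in_setU1; congr (_ || _); rewrite orbC.
by rewrite /cone_simplex /lift_simplex imset0 setU0.
Qed.

Lemma lift_in_cone_glue A C s :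
  set0 \notin A -> (lift_simplex s \in cone_glue A C) = (s \in A).
Proof.
move=> A0; rewrite mem_cone_glue (mem_imset _ _ lift_simplex_inj) orbC.
by case: imsetP => // -[t _ /eqP]; rewrite (negbTE (lift_neq_cone _ _)).
Qed.

Lemma cone_in_cone_glue A C s :
  (cone_simplex s \in cone_glue A C) = (s \in cone_base C).
Proof.
rewrite mem_cone_glue (mem_imset _ _ cone_simplex_inj).
by case: imsetP => // -[t _ /eqP]; rewrite eq_sym (negbTE (lift_neq_cone _ _)).
Qed.

Lemma cone_glueP A C X : X \in cone_glue A C ->
  (exists2 s, s \in A & X = lift_simplex s) \/
  (exists2 s, s \in cone_base C & X = cone_simplex s).
Proof. by rewrite mem_cone_glue => /orP[] /imsetP[s sA ->]; [left|right]; exists s. Qed.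

Lemma forall_cone_glue A C (P : pred {set option T}) : set0 \notin A ->
  [forall X in cone_glue A C, P X] =
  [forall s in A, P (lift_simplex s)] && [forall s in cone_base C, P (cone_simplex s)].
Proof.
move=> A0; apply/forall_inP/andP => [H|[/forall_inP H1 /forall_inP H2] X].
  by split; apply/forall_inP => s sA; apply: H;
    rewrite ?lift_in_cone_glue ?cone_in_cone_glue.
by case/cone_glueP => -[s sA ->]; [apply: H1 | apply: H2].
Qed.

End ConeGlue.

Section Complexes.
Variable T : finType.
Implicit Types (K : {set {set T}}) (s t e : {set T}).

Lemma complex_set0F K : is_complex K -> (set0 \in K) = false.
Proof. by case/andP => /negbTE. Qed.

Lemma complex_face K s t :
  is_complex K -> s \in K -> t \subset s -> t != set0 -> t \in K.
Proof.
by case/andP => _ /forall_inP cK sK ts t0; apply: (implyP (forallP (cK s sK) t)); rewrite ts.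
Qed.

Lemma complex_neq0 K s : is_complex K -> s \in K -> s != set0.
Proof. by move=> cK; apply: contraTneq => ->; rewrite complex_set0F. Qed.

Lemma facet_subset s t : is_facet s t -> s \subset t.
Proof. by case/andP. Qed.

Lemma facet_card s t : is_facet s t -> #|t| = #|s|.+1.
Proof. by case/andP => _ /eqP. Qed.

Lemma facet_neq0 s t : is_facet s t -> t != set0.
Proof. by move/facet_card; apply: contra_eqN => /eqP ->; rewrite cards0. Qed.

Lemma set1_neq0 (v : T) : [set v] != set0.
Proof. by apply/set0Pn; exists v; rewrite inE. Qed.

Lemma facet_set0 t : is_facet set0 t -> exists v, t = [set v].
Proof. by move/facet_card; rewrite cards0 => /eqP/cards1P. Qed.

Lemma facet_set0F t : is_facet t set0 = false.
Proof. by rewrite /is_facet cards0 andbF. Qed.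

Lemma facet_set1 t v : is_facet t [set v] -> t = set0.
Proof. by move/facet_card; rewrite cards1 => -[] /esym/eqP; rewrite cards_eq0 => /eqP. Qed.

Lemma facet_pair t e : #|e| = 2 -> is_facet t e -> exists2 u, u \in e & t = [set u].
Proof.
move=> e2 te; have := facet_card te; rewrite e2 => -[] /esym/eqP/cards1P[u tu].
by exists u => //; rewrite -sub1set -tu facet_subset.
Qed.

Lemma facet_from_set1 v t : is_facet [set v] t -> v \in t /\ #|t| = 2.
Proof. by move=> vt; rewrite -sub1set facet_subset // (facet_card vt) cards1. Qed.

End Complexes.

Section Pairing.
Variables (T : finType) (R : realFieldType).
Implicit Types (K M A : {set {set T}}) (f : {set T} -> R) (s t : {set T}).
Local Open Scope ring_scope.

Definition unpaired K f s :=
  [forall t in K, is_facet s t ==> (f s < f t)] &&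
  [forall t in K, is_facet t s ==> (f t < f s)].

Definition paired_with M f s t :=
  ((s, t) \in gradient M f) || ((t, s) \in gradient M f).

Lemma criticalE K f s : critical K f s = (s \in K) && unpaired K f s.
Proof. by []. Qed.

Lemma in_gradient M f s t :
  ((s, t) \in gradient M f) = [&& s \in M, t \in M, is_facet s t & f t <= f s].
Proof. by rewrite inE. Qed.

Lemma paired_unpairedF K M f s t :
  t \in K -> paired_with M f s t -> ~~ unpaired K f s.
Proof.
move=> tK; rewrite /paired_with !in_gradient => /orP[] /and4P[_ _ st le].
  by apply/nandP; left; apply/forall_inP => /(_ t tK); rewrite st ltNge le.
by apply/nandP; right; apply/forall_inP => /(_ t tK); rewrite st ltNge le.
Qed.

Lemma discrete_morse_sub K M f :
  K \subset M -> discrete_morse M f -> discrete_morse K f.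
Proof.
move=> /subsetP KM dmM s /KM /dmM[up dn].
by split; [apply: leq_trans up | apply: leq_trans dn]; apply/subset_leq_card/subsetP => t;
  rewrite !inE => /and3P[/KM -> -> ->].
Qed.

End Pairing.

Lemma card_le1_imset (U V : finType) (h : U -> V) (S : {set V}) (S' : {set U}) :
  S \subset h @: S' -> (#|S'| <= 1 -> #|S| <= 1)%N.
Proof.
by move=> sub le; apply: leq_trans (subset_leq_card sub) (leq_trans (leq_imset_card h S') le).
Qed.

Section ConeExtension.
Variables (T : finType) (R : realFieldType).
Variables (A C : {set {set T}}) (f g : {set T} -> R).
Hypotheses (A0 : set0 \notin A) (CA : C \subset A).
Local Open Scope ring_scope.

Definition cone_ext (X : {set option T}) : R :=
  if None \in X then g (unlift X) else f (unlift X).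

Lemma cone_ext_lift s : cone_ext (lift_simplex s) = f s.
Proof. by rewrite /cone_ext None_lift_simplexF unlift_lift. Qed.

Lemma cone_ext_cone s : cone_ext (cone_simplex s) = g s.
Proof. by rewrite /cone_ext None_cone_simplex unlift_cone. Qed.

Local Notation K := (cone_glue A C).
Local Notation drops_to_cone s := ((s \in C) && (g s <= f s)).

Lemma cone_base_A s : s \in cone_base C -> s \in A -> s \in C.
Proof. by rewrite in_cone_base => /orP[/eqP-> | //]; rewrite (negbTE A0). Qed.

Lemma in_cone_base_C s : s \in C -> s \in cone_base C.
Proof. by rewrite in_cone_base => ->; rewrite orbT. Qed.

Lemma unpaired_lift s : s \in A ->
  unpaired K cone_ext (lift_simplex s) = unpaired A f s && ~~ drops_to_cone s.
Proof.
move=> sA; rewrite /unpaired !forall_cone_glue //.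
under [Z in (Z && _) && _]eq_forallb do rewrite facet_lift !cone_ext_lift.
under [Z in (_ && Z) && _]eq_forallb do rewrite facet_lift_cone cone_ext_lift cone_ext_cone.
under [Z in _ && (Z && _)]eq_forallb do rewrite facet_lift !cone_ext_lift.
have -> : [forall t in cone_base C, is_facet (cone_simplex t) (lift_simplex s) ==>
           (cone_ext (cone_simplex t) < cone_ext (lift_simplex s))] = true.
  by apply/forall_inP => t _; rewrite facet_cone_lift.
have -> : [forall t in cone_base C, (s == t) ==> (f s < g t)] = ~~ drops_to_cone s.
  apply/forall_inP/idP => [up | nd t tC]; last first.
    apply/implyP => /eqP st; rewrite -st in tC *.
    by move: nd; rewrite (cone_base_A tC sA) -ltNge.
  apply/andP => -[sC]; apply/negP; rewrite -ltNge.
  by have := up s (in_cone_base_C sC); rewrite eqxx.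
by rewrite andbT -!andbA (andbC (~~ _)).
Qed.

Lemma unpaired_cone s : s \in cone_base C ->
  unpaired K cone_ext (cone_simplex s) = unpaired (cone_base C) g s && ~~ drops_to_cone s.
Proof.
move=> sC; rewrite /unpaired !forall_cone_glue //.
have -> : [forall t in A, is_facet (cone_simplex s) (lift_simplex t) ==>
           (cone_ext (cone_simplex s) < cone_ext (lift_simplex t))] = true.
  by apply/forall_inP => t _; rewrite facet_cone_lift.
under [Z in (_ && Z) && _]eq_forallb do rewrite facet_cone !cone_ext_cone.
under [Z in _ && (Z && _)]eq_forallb do rewrite facet_lift_cone cone_ext_lift cone_ext_cone.
under [Z in _ && (_ && Z)]eq_forallb do rewrite facet_cone !cone_ext_cone.
have -> : [forall t in A, (t == s) ==> (f t < g s)] = ~~ drops_to_cone s.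
  apply/forall_inP/idP => [dn | nd t tA]; last first.
    apply/implyP => /eqP ts; rewrite ts in tA *.
    by move: nd; rewrite (cone_base_A sC tA) -ltNge.
  apply/andP => -[sC']; apply/negP; rewrite -ltNge.
  by have := dn s (subsetP CA _ sC'); rewrite eqxx.
by rewrite /= -!andbA (andbC (~~ _)).
Qed.

Lemma gradient_lift M s t : (s, t) \in gradient M f -> s \in A -> t \in A ->
  (lift_simplex s, lift_simplex t) \in gradient K cone_ext.
Proof.
rewrite !in_gradient => /and4P[_ _ st le] sA tA.
by rewrite !lift_in_cone_glue // sA tA facet_lift !cone_ext_lift st le.
Qed.

Hypothesis dmA : discrete_morse A f.
Hypothesis dmC : discrete_morse (cone_base C) g.
Hypothesis drop_up : forall s t, drops_to_cone s -> t \in A -> is_facet s t -> f s < f t.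
Hypothesis drop_down :
  forall s t, drops_to_cone s -> t \in cone_base C -> is_facet t s -> g t < g s.

Lemma discrete_morse_lift s : s \in A ->
  (#|[set Y in K | is_facet (lift_simplex s) Y &
        (cone_ext Y <= cone_ext (lift_simplex s))%R]| <= 1)%N /\
  (#|[set Y in K | is_facet Y (lift_simplex s) &
        (cone_ext (lift_simplex s) <= cone_ext Y)%R]| <= 1)%N.
Proof.
move=> sA; have [upA dnA] := dmA sA; split; last first.
  apply: card_le1_imset dnA; apply/subsetP => Y; rewrite in_set.
  case/and3P => /cone_glueP[][t tA ->]; rewrite ?facet_cone_lift // facet_lift !cone_ext_lift.
  by move=> ts le; apply: imset_f; rewrite inE tA ts.
have [drop | nd] := boolP (drops_to_cone s).
  rewrite -(cards1 (cone_simplex s)); apply/subset_leq_card/subsetP => Y; rewrite inE.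
  case/and3P => /cone_glueP[][t tA ->]; rewrite ?facet_lift ?facet_lift_cone => st.
    by rewrite !cone_ext_lift leNgt drop_up.
  by move: st => /eqP <- _; rewrite inE.
apply: card_le1_imset upA; apply/subsetP => Y; rewrite in_set.
case/and3P => /cone_glueP[][t tA ->]; rewrite ?facet_lift ?facet_lift_cone => st.
  by rewrite !cone_ext_lift => le; apply: imset_f; rewrite inE tA st.
move: st tA => /eqP <- sC; rewrite cone_ext_lift cone_ext_cone => le.
by move: nd; rewrite (cone_base_A sC sA) le.
Qed.

Lemma discrete_morse_cone s : s \in cone_base C ->
  (#|[set Y in K | is_facet (cone_simplex s) Y &
        (cone_ext Y <= cone_ext (cone_simplex s))%R]| <= 1)%N /\
  (#|[set Y in K | is_facet Y (cone_simplex s) &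
        (cone_ext (cone_simplex s) <= cone_ext Y)%R]| <= 1)%N.
Proof.
move=> sC; have [upC dnC] := dmC sC; split.
  apply: card_le1_imset upC; apply/subsetP => Y; rewrite in_set.
  case/and3P => /cone_glueP[][t tC ->]; rewrite ?facet_cone_lift // facet_cone !cone_ext_cone.
  by move=> st le; apply: imset_f; rewrite inE tC st.
have [drop | nd] := boolP (drops_to_cone s).
  rewrite -(cards1 (lift_simplex s)); apply/subset_leq_card/subsetP => Y; rewrite inE.
  case/and3P => /cone_glueP[][t tC ->]; rewrite ?facet_cone ?facet_lift_cone => ts.
    by move: ts => /eqP -> _; rewrite inE.
  by rewrite !cone_ext_cone leNgt drop_down.
apply: card_le1_imset dnC; apply/subsetP => Y; rewrite in_set.
case/and3P => /cone_glueP[][t tC ->]; rewrite ?facet_cone ?facet_lift_cone => ts.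
  move: ts tC => /eqP -> sA; rewrite cone_ext_lift cone_ext_cone => le.
  by move: nd; rewrite (cone_base_A sC sA) le.
by rewrite !cone_ext_cone => le; apply: imset_f; rewrite inE tC ts.
Qed.

Lemma discrete_morse_cone_glue : discrete_morse K cone_ext.
Proof.
move=> X /cone_glueP[][s sA ->]; [exact: discrete_morse_lift | exact: discrete_morse_cone].
Qed.

End ConeExtension.

Section GluedCriticalCells.
Variables (T : finType) (R : realFieldType).
Variables (M A C : {set {set T}}) (f : {set T} -> R) (F : {set option T} -> R).
Local Notation K := (cone_glue A C).

Lemma ncrit_cone_glue p :
  (forall s, s \in A -> critical K F (lift_simplex s) = (s \notin C) && critical M f s) ->
  ncrit K F p =
  (#|[set s in A :\: C | critical M f s & #|s| == p.+1]| +
   #|[set s in cone_base C | critical K F (cone_simplex s) & #|s| == p]|)%N.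
Proof.
move=> crit_lift; rewrite /ncrit.
set SL := [set s in A :\: C | _ & _]; set SC := [set s in cone_base C | _ & _].
have -> : [set X | critical K F X & #|X| == p.+1] =
          (@lift_simplex T) @: SL :|: (@cone_simplex T) @: SC.
  apply/setP => X; rewrite in_setU in_set; apply/andP/orP => [[cX] | ].
    case/andP: (cX) => /cone_glueP[][s sA EX] _; subst X.
      move: cX; rewrite crit_lift // => /andP[sC cs].
      by rewrite card_lift_simplex => ps; left; apply: imset_f; rewrite !inE sC sA cs ps.
    by rewrite card_cone_simplex eqSS => ps; right; apply: imset_f; rewrite inE sA cX ps.
  case=> /imsetP[s]; rewrite inE => /and3P[sX cs ps] ->.
    move: sX; rewrite in_setD => /andP[sC sA].
    by rewrite crit_lift // sC cs card_lift_simplex.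
  by rewrite cs card_cone_simplex.
rewrite cardsU !card_imset; [|exact: cone_simplex_inj|exact: lift_simplex_inj].
suff -> : (@lift_simplex T) @: SL :&: (@cone_simplex T) @: SC = set0 by rewrite cards0 subn0.
apply/setP => X; rewrite !inE; apply/negP => /andP[/imsetP[s _ ->] /imsetP[t _ /eqP]].
by rewrite (negbTE (lift_neq_cone _ _)).
Qed.

End GluedCriticalCells.

(** * Splitting a complex along [C] *)

Section Splitting.
Variables (T : finType) (R : realFieldType).
Variables (M A B C : {set {set T}}) (f : {set T} -> R).
Hypotheses (HA : is_subcomplex A M) (HB : is_subcomplex B M).
Hypotheses (HU : A :|: B = M) (HI : A :&: B = C).

Lemma sub_split_l : A \subset M.
Proof. by case/andP: HA. Qed.

Lemma sub_split_C : C \subset A.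
Proof. by rewrite -HI subsetIl. Qed.

Lemma set0_notin_split_l : set0 \notin A.
Proof. by case/andP: HA => /complex_set0F ->. Qed.

Lemma mem_split_C s : s \in C -> s \in M.
Proof. by move=> sC; apply/(subsetP sub_split_l)/(subsetP sub_split_C). Qed.

Lemma in_split_C s : s \in A -> s \in B -> s \in C.
Proof. by rewrite -HI inE => -> ->. Qed.

Lemma split_set0F : (set0 \in M) = false.
Proof.
by rewrite -HU inE !complex_set0F //; [case/andP: HB | case/andP: HA].
Qed.

Lemma split_neq0 s : s \in M -> s != set0.
Proof. by apply: contraTneq => ->; rewrite split_set0F. Qed.

Lemma unpaired_split s : s \in A -> s \notin C -> unpaired M f s = unpaired A f s.
Proof.
have [cA /subsetP AM] := andP HA; have [cB _] := andP HB.
move=> sA sC; congr andb; apply/forall_inP/forall_inP => H t tK;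
  do ?[exact: H (AM t tK)]; apply/implyP => st; apply: (implyP (H t _) st).
  move: tK (tK); rewrite -{1}HU inE => /orP[// | tB] tM.
  have sB := complex_face cB tB (facet_subset st) (split_neq0 (AM s sA)).
  by rewrite (in_split_C sA sB) in sC.
exact: complex_face cA sA (facet_subset st) (split_neq0 tK).
Qed.

Lemma card_crit_outside p :
  (forall s, critical M f s -> #|s| = p.+1 -> s \in B) ->
  #|[set s in A :\: C | critical M f s & #|s| == p.+1]| = 0%N.
Proof.
move=> crit_B; apply/eqP; rewrite cards_eq0; apply/eqP/setP => s; rewrite !inE.
apply/negP => /and3P[/andP[sC sA] cs /eqP ps].
by rewrite (in_split_C sA (crit_B s cs ps)) in sC.
Qed.

Lemma card_crit_inside p :
  (forall s, critical M f s -> #|s| = p.+1 -> s \in A :\: C) ->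
  #|[set s in A :\: C | critical M f s & #|s| == p.+1]| = ncrit M f p.
Proof.
move=> crit_A; congr #|pred_of_set _|; apply/setP => s; rewrite [LHS]in_set [RHS]in_set.
by apply/and3P/andP => [[_ -> ->] // | [cs ps]]; split=> //; apply: crit_A cs (eqP ps).
Qed.

End Splitting.

Section SplitCone.
Variables (T : finType) (R : realFieldType).
Variables (M A B C : {set {set T}}) (f g : {set T} -> R).
Hypotheses (HA : is_subcomplex A M) (HB : is_subcomplex B M).
Hypotheses (HU : A :|: B = M) (HI : A :&: B = C).
Local Notation K := (cone_glue A C).
Local Notation F := (cone_ext f g).

Lemma critical_lift_split :
  (forall s, s \in C -> unpaired A f s -> (g s <= f s)%R) ->
  forall s, s \in A -> critical K F (lift_simplex s) = (s \notin C) && critical M f s.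
Proof.
move=> C_drops s sA; have A0 := set0_notin_split_l HA.
rewrite !criticalE lift_in_cone_glue // sA unpaired_lift //=.
case: (boolP (s \in C)) => [sC | sC] /=; last first.
  by rewrite andbT (subsetP (sub_split_l HA)) //= (unpaired_split f HA HB HU HI sA sC).
by apply/negP => /andP[/(C_drops s sC) ->].
Qed.

Definition perfect_cone_extension (gen : nat) (G : {set option T} -> R) :=
  [/\ perfect_surface K gen G,
      forall s, s \in A -> G (lift_simplex s) = f s
    & forall s t, (s, t) \in gradient M f -> s \in A -> t \in A ->
        (lift_simplex s, lift_simplex t) \in gradient K G].

Lemma perfect_cone_ext gen : perfect_surface K gen F -> perfect_cone_extension gen F.
Proof.
move=> perfF; split=> // [s _ | s t]; first exact: cone_ext_lift.
by apply: gradient_lift; apply: set0_notin_split_l HA.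
Qed.

End SplitCone.

(** * The side containing the critical 2-cell *)

Section ApexSide.
Variables (T : finType) (R : realFieldType).
Variables (M A B C : {set {set T}}) (f : {set T} -> R).
Hypotheses (HA : is_subcomplex A M) (HB : is_subcomplex B M).
Hypotheses (HU : A :|: B = M) (HI : A :&: B = C).
Hypotheses (dmM : discrete_morse M f) (HC : is_complex C).
Hypothesis C_paired_B : forall s, s \in C -> exists2 t, t \in B & paired_with M f s t.
Implicit Types (s t : {set T}).
Local Open Scope ring_scope.

Let C_in_M := mem_split_C HA HI.

Definition paired_in_C s := [exists t in C, paired_with M f s t].

(* The default [1] only matters when [f] is constant. *)
Definition gap : R :=
  \big[Order.min/1]_(p : {set T} * {set T} | f p.1 < f p.2) ((f p.2 - f p.1) / 3%:R).

Definition shifted s := f s + (if paired_in_C s then gap else - gap).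

Definition apex_value := \big[Order.min/0]_(s in C) shifted s - 1.

Definition lowered s := if s == set0 then apex_value else shifted s.

Lemma gap_gt0 : 0 < gap.
Proof. by apply: lt_bigmin => // -[s t] /= lt; rewrite divr_gt0 // subr_gt0. Qed.

Lemma shifted_lt s t : f s < f t -> shifted s < shifted t.
Proof.
move=> lt; have : gap <= (f t - f s) / 3%:R by apply: (bigmin_le_cond _ (j := (s, t))).
rewrite ler_pdivlMr ?ltr0n // /shifted; have := gap_gt0.
by case: (paired_in_C s); case: (paired_in_C t); lra.
Qed.

Lemma shifted_le s t : shifted t <= shifted s -> f t <= f s.
Proof. by apply: contraTT; rewrite -!ltNge; apply: shifted_lt. Qed.

Lemma shifted_le_f s : (shifted s <= f s) = ~~ paired_in_C s.
Proof. by rewrite /shifted; have := gap_gt0; case: (paired_in_C s) => /= ?; lra. Qed.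

Lemma apex_lt s : s \in C -> apex_value < shifted s.
Proof.
move=> sC; have : \big[Order.min/0]_(t in C) shifted t <= shifted s.
  exact: bigmin_le_cond.
rewrite /apex_value; lra.
Qed.

Lemma lowered0 : lowered set0 = apex_value.
Proof. by rewrite /lowered eqxx. Qed.

Lemma lowered_C s : s \in C -> lowered s = shifted s.
Proof. by move=> sC; rewrite /lowered (negbTE (complex_neq0 HC sC)). Qed.

Lemma partner_across s : s \in C -> ~~ paired_in_C s ->
  exists2 t, t \in B :\: C & (s, t) \in gradient M f.
Proof.
move=> sC nC; have [t tB st] := C_paired_B sC.
have tC : t \notin C by apply: contra nC => tC; apply/existsP; exists t; rewrite tC.
exists t; first by rewrite inE tC.
case/orP: st => // /[dup] ts; rewrite in_gradient => /and4P[tM _ /facet_subset ts' _].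
by rewrite (complex_face HC sC ts' (split_neq0 HA HB HU tM)) in tC.
Qed.

Lemma lowered_drop_up s t :
  (s \in C) && (lowered s <= f s) -> t \in A -> is_facet s t -> f s < f t.
Proof.
case/andP=> sC; rewrite lowered_C // shifted_le_f => /(partner_across sC)[u uBC su] tA st.
rewrite ltNge; apply/negP => ts; move: su; rewrite in_gradient => /and4P[sM uM su us].
have tM := subsetP (sub_split_l HA) t tA; have [up _] := dmM sM.
have ut : u = t by apply: (card_le1_eqP up); rewrite inE ?uM ?su ?us ?tM ?st ?ts.
by move: uBC; rewrite ut in_setD => /andP[/negP nC tB]; apply/nC/(in_split_C HI tA tB).
Qed.

Lemma lowered_drop_down s t : (s \in C) && (lowered s <= f s) ->
  t \in cone_base C -> is_facet t s -> lowered t < lowered s.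
Proof.
case/andP=> sC; rewrite (lowered_C sC) shifted_le_f => nC.
rewrite in_cone_base => /orP[/eqP -> _ | tC ts]; first by rewrite lowered0 apex_lt.
rewrite lowered_C //; case: (ltP (f t) (f s)) => [|st]; first exact: shifted_lt.
case/negP: nC; apply/existsP; exists t.
by rewrite tC /paired_with !in_gradient !C_in_M // ts st orbT.
Qed.

Lemma discrete_morse_lowered : discrete_morse (cone_base C) lowered.
Proof.
move=> s; rewrite in_cone_base => /orP[/eqP -> | sC]; split.
- apply/card_le1_eqP => t u; rewrite !inE => /and3P[+ /facet_neq0 t0].
  rewrite lowered0 (negbTE t0) /= => tC.
  by rewrite leNgt lowered_C ?apex_lt.
- by apply/card_le1_eqP => t u; rewrite !inE => /and3P[_ /facet_card]; rewrite cards0.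
- have [up _] := dmM (C_in_M sC).
  apply: leq_trans up; apply/subset_leq_card/subsetP => t.
  rewrite !inE => /and3P[+ st]; rewrite (negbTE (facet_neq0 st)) /= => tC.
  by rewrite !lowered_C // C_in_M // st => /shifted_le.
- have [_ dn] := dmM (C_in_M sC).
  apply: leq_trans dn; apply/subset_leq_card/subsetP => t.
  rewrite !inE => /and3P[/orP[/eqP -> | tC] ts]; first by rewrite lowered0 leNgt lowered_C ?apex_lt.
  by rewrite !lowered_C // C_in_M // ts => /shifted_le.
Qed.

Lemma paired_lowered s t : s \in C -> t \in C ->
  paired_with M f s t -> paired_with (cone_base C) lowered s t.
Proof.
have inC u v : v \in C -> paired_with M f u v -> paired_in_C u.
  by move=> vC puv; apply/existsP; exists v; rewrite vC.
move=> sC tC pst; have ps := inC s t tC pst.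
have pt : paired_in_C t by apply: inC sC _; rewrite /paired_with orbC.
move: pst; rewrite /paired_with !in_gradient !in_cone_base sC tC !orbT !lowered_C //.
by rewrite /shifted ps pt !lerD2r; case/orP => /and4P[_ _ -> ->]; rewrite ?orbT.
Qed.

Local Notation K := (cone_glue A C).
Local Notation F := (cone_ext f lowered).

Lemma critical_cone_lowered s : s \in cone_base C -> critical K F (cone_simplex s) = (s == set0).
Proof.
move=> sB; rewrite criticalE cone_in_cone_glue sB unpaired_cone //=; last first.
- exact: sub_split_C HI.
- exact: set0_notin_split_l HA.
move: sB; rewrite in_cone_base => /orP[/eqP -> | sC].
  rewrite eqxx complex_set0F //= andbT; apply/andP; split; last first.
    by apply/forall_inP => t _; apply/implyP => /facet_card; rewrite cards0.
  apply/forall_inP => t; rewrite in_cone_base => tB; apply/implyP => st.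
  move: tB; rewrite (negbTE (facet_neq0 st)) /= => tC.
  by rewrite lowered0 lowered_C ?apex_lt.
rewrite (negbTE (complex_neq0 HC sC)) sC /=; have [pC | nC] := boolP (paired_in_C s).
  case/existsP: pC => t /andP[tC pst].
  by rewrite (negbTE (paired_unpairedF _ (paired_lowered sC tC pst))) // in_cone_base tC orbT.
by rewrite lowered_C // shifted_le_f nC andbF.
Qed.

Lemma lowered_le_of_unpaired s : s \in C -> unpaired A f s -> lowered s <= f s.
Proof.
move=> sC; rewrite lowered_C // shifted_le_f; apply: contraTN => /existsP[t /andP[tC pst]].
exact: paired_unpairedF (subsetP (sub_split_C HI) t tC) pst.
Qed.

Lemma card_critical_cone_lowered p :
  #|[set s in cone_base C | critical K F (cone_simplex s) & #|s| == p]| = (p == 0)%N.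
Proof.
have crit0 : critical K F (cone_simplex set0).
  by rewrite critical_cone_lowered ?in_cone_base eqxx.
case: p => [|p] /=.
  rewrite -(cards1 (@set0 T)); congr #|pred_of_set _|; apply/setP => s; rewrite !inE.
  apply/and3P/eqP => [[_ _ /eqP/cards0_eq //] | ->].
  by rewrite eqxx crit0 cards0.
apply/eqP; rewrite cards_eq0; apply/eqP/setP => s; rewrite !inE.
by apply/and3P => -[sB]; rewrite critical_cone_lowered ?in_cone_base // => /eqP ->; rewrite cards0.
Qed.

Lemma perfect_cone_lowered gen :
  (forall s, critical M f s -> #|s| = 1%N -> s \in B) ->
  #|[set s in A :\: C | critical M f s & #|s| == 2%N]| = (2 * gen)%N ->
  (forall s, critical M f s -> #|s| = 3%N -> s \in A :\: C) ->
  ncrit M f 2 = 1%N ->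
  perfect_cone_extension M A C f gen F.
Proof.
move=> crit_vertex crit_edges crit_triangle ncrit2; apply: perfect_cone_ext => //.
have ncritE p := ncrit_cone_glue p (critical_lift_split HA HB HU HI lowered_le_of_unpaired).
split; rewrite ?ncritE ?card_critical_cone_lowered /= ?addn0 //.
- apply: discrete_morse_cone_glue lowered_drop_up lowered_drop_down.
  + exact: set0_notin_split_l HA.
  + exact: discrete_morse_sub (sub_split_l HA) dmM.
  + exact: discrete_morse_lowered.
- by rewrite (card_crit_outside HI crit_vertex).
- by rewrite (card_crit_inside crit_triangle).
Qed.

End ApexSide.

(** * The side containing the critical vertex *)

Section BreadthFirst.
Variables (T : finType) (C : {set {set T}}) (r : T).

Fixpoint ball n : {set T} :=
  if n is n'.+1 then ball n' :|: [set v | [exists u in ball n', adj C u v]] else [set r].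

Lemma ball_path p x n : x \in ball n -> path (adj C) x p -> last x p \in ball (n + size p).
Proof.
elim: p x n => [|y p IHp] x n /=; first by rewrite addn0.
move=> xn /andP[xy yp]; rewrite addnS -addSn; apply: IHp yp.
by rewrite /= !inE; apply/orP; right; apply/existsP; exists x; rewrite xn.
Qed.

Hypotheses (HC : is_complex C) (rC : [set r] \in C) (conC : connected_cx C).

Lemma ball_exists v : exists n, (v \in ball n) || ([set v] \notin C).
Proof.
case vC: ([set v] \in C); last by exists 0%N; rewrite orbT.
have /connectP[p rp ->] := conC rC vC.
by exists (0 + size p)%N; rewrite (ball_path _ rp) // inE.
Qed.

Definition depth v := ex_minn (ball_exists v).

Lemma depthP v : [set v] \in C -> v \in ball (depth v).
Proof. by rewrite /depth; case: ex_minnP => n + _ vC; rewrite vC orbF. Qed.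

Lemma depth_min v n : v \in ball n -> (depth v <= n)%N.
Proof. by rewrite /depth; case: ex_minnP => m _ min vn; apply: min; rewrite vn. Qed.

Lemma depth_root : depth r = 0%N.
Proof. by apply/eqP; rewrite -leqn0 depth_min // inE. Qed.

Lemma adj_vertex u v : adj C u v -> [set u] \in C.
Proof.
case/andP => _ uvC; apply: (complex_face HC uvC); last exact: set1_neq0.
by rewrite sub1set !inE eqxx.
Qed.

Lemma ex_parent v : [set v] \in C -> v != r ->
  exists u, adj C u v && ((depth u).+1 == depth v).
Proof.
move=> vC vr; have := depthP vC; case Ed: (depth v) => [|k] /=.
  by rewrite inE => /eqP vr'; rewrite vr' eqxx in vr.
rewrite !inE => /orP[vk | /existsP[u /andP[uk uv]]].
  by have := depth_min vk; rewrite Ed ltnn.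
exists u; rewrite uv eqn_leq ltnS depth_min //= -Ed depth_min //= !inE.
by apply/orP; right; apply/existsP; exists u; rewrite depthP ?(adj_vertex uv).
Qed.

Definition parent v := odflt v [pick u | adj C u v && ((depth u).+1 == depth v)].

Lemma parentP v : [set v] \in C -> v != r ->
  [/\ [set parent v; v] \in C, parent v != v & (depth (parent v)).+1 = depth v].
Proof.
move=> vC vr; rewrite /parent; case: pickP => [u /andP[/andP[uv uvC] /eqP] | none] /=.
  by split.
by have [u] := ex_parent vC vr; rewrite none.
Qed.

End BreadthFirst.

Lemma card_in_sum (U : finType) (A : {set U}) (P : pred U) :
  #|[set x in A | P x]| = \sum_(x in A) P x.
Proof. by rewrite -sum1dep_card big_mkcondr. Qed.

Definition verts (T : finType) (C : {set {set T}}) := [set v | [set v] \in C].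

Lemma card_edges_curve (T : finType) (C : {set {set T}}) :
  simple_closed_curve C -> #|cells C 1| = #|verts C|.
Proof.
case=> HC _ _ deg2 _.
have vdeg : (\sum_(v in verts C) #|[set e in cells C 1 | v \in e]| = 2 * #|verts C|)%N.
  by rewrite -[#|verts C|]sum1_card big_distrr /= muln1; apply: eq_bigr => v; rewrite inE => /deg2.
have edeg : (\sum_(e in cells C 1) #|[set v in verts C | v \in e]| = 2 * #|cells C 1|)%N.
  rewrite -[#|cells C 1|]sum1_card big_distrr /= muln1.
  apply: eq_bigr => e; rewrite inE => /andP[eC /eqP <-].
  congr #|pred_of_set _|; apply/setP => v; rewrite !inE andb_idl // => ve.
  by apply: (complex_face HC eC); rewrite ?sub1set ?set1_neq0.
apply/eqP; rewrite -(eqn_pmul2l (isT : 0 < 2)%N) -vdeg -edeg; apply/eqP.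
under eq_bigr do rewrite card_in_sum.
by rewrite exchange_big; apply: eq_bigr => e _; rewrite card_in_sum.
Qed.

Lemma curve_vertex (T : finType) (C : {set {set T}}) :
  simple_closed_curve C -> exists r, [set r] \in C.
Proof.
case=> HC /set0Pn[s sC] _ _ _; have /set0Pn[v vs] := complex_neq0 HC sC.
by exists v; apply: (complex_face HC sC); rewrite ?sub1set ?set1_neq0.
Qed.

Section TreeSide.
Variables (T : finType) (R : realFieldType).
Variables (M A B C : {set {set T}}) (f : {set T} -> R) (r : T).
Hypotheses (HA : is_subcomplex A M) (HB : is_subcomplex B M).
Hypotheses (HU : A :|: B = M) (HI : A :&: B = C).
Hypotheses (dmM : discrete_morse M f) (curveC : simple_closed_curve C).
Hypothesis rC : [set r] \in C.
Hypothesis C_paired_A : forall s, s \in C -> exists2 t, t \in A & paired_with M f s t.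
Implicit Types (s t e : {set T}).
Local Open Scope ring_scope.

Let HC : is_complex C. Proof. by case: curveC. Qed.
Let C_small s : s \in C -> (#|s| <= 2)%N. Proof. by case: curveC => _ _ + _ _; apply. Qed.
Let conC : connected_cx C. Proof. by case: curveC. Qed.

Local Notation depth := (depth rC conC).
Local Notation parent := (parent rC conC).

Definition tree_edge x := [set parent x; x].
Definition tree_edges := [set tree_edge x | x in verts C :\ r].
Definition height s := (\max_(x in s) depth x)%N.

(* The apex ties with the cone over [r], the cone over a vertex [v] with the cone over its tree
   edge (at [2 * depth v + 1]), and the cone over the non-tree edge exceeds all its faces. *)
Definition cone_rank s :=
  (2 * height s + (if (#|s| == 2) && (s \notin tree_edges) then 2 else 1))%N.

Definition raised s : R := 1 + \sum_(t in C) `|f t| + (cone_rank s)%:R.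

Lemma in_verts_r x : x \in verts C :\ r -> [set x] \in C /\ x != r.
Proof. by rewrite !inE => /andP[-> ->]. Qed.

Lemma tree_edgeP x : x \in verts C :\ r ->
  [/\ tree_edge x \in C, parent x != x & (depth (parent x)).+1 = depth x].
Proof. by case/in_verts_r => xC xr; apply: parentP. Qed.

Lemma card_tree_edge x : x \in verts C :\ r -> #|tree_edge x| = 2%N.
Proof. by case/tree_edgeP => _ px _; rewrite cards2 px. Qed.

Lemma height1 v : height [set v] = depth v.
Proof. by rewrite /height big_set1. Qed.

Lemma height_ge s u : u \in s -> (depth u <= height s)%N.
Proof. by move=> us; apply: (leq_bigmax_cond (P := mem s)). Qed.

Lemma height_tree_edge x : x \in verts C :\ r -> height (tree_edge x) = depth x.
Proof.
case/tree_edgeP => _ px dx; rewrite /height big_setU1 ?inE // big_set1 /=.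
by rewrite -dx; apply/maxn_idPr.
Qed.

Lemma tree_edge_inj : {in verts C :\ r &, injective tree_edge}.
Proof.
move=> x y xV yV Exy; have [_ _ dx] := tree_edgeP xV; have [_ _ dy] := tree_edgeP yV.
have : x \in tree_edge y by rewrite -Exy !inE eqxx orbT.
rewrite !inE => /orP[/eqP xpy | /eqP //].
have : y \in tree_edge x by rewrite Exy !inE eqxx orbT.
rewrite !inE => /orP[/eqP ypx | /eqP //].
by move: dx dy; rewrite -xpy -ypx => <-; lia.
Qed.

Lemma rank0 : cone_rank set0 = 1%N.
Proof. by rewrite /cone_rank /height big_set0 cards0. Qed.

Lemma rank1 v : cone_rank [set v] = (2 * depth v + 1)%N.
Proof. by rewrite /cone_rank height1 cards1. Qed.

Lemma rank_tree_edge x : x \in verts C :\ r -> cone_rank (tree_edge x) = (2 * depth x + 1)%N.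
Proof. by move=> xV; rewrite /cone_rank height_tree_edge // imset_f // andbF. Qed.

Lemma rank_other_edge e : #|e| = 2%N -> e \notin tree_edges ->
  cone_rank e = (2 * height e + 2)%N.
Proof. by move=> e2 eT; rewrite /cone_rank e2 eT. Qed.

Lemma raised_le s t : (raised t <= raised s) = (cone_rank t <= cone_rank s)%N.
Proof. by rewrite lerD2l ler_nat. Qed.

Lemma raised_lt s t : (raised t < raised s) = (cone_rank t < cone_rank s)%N.
Proof. by rewrite ltrD2l ltr_nat. Qed.

Lemma f_lt_raised s : s \in C -> (f s < raised s)%R.
Proof.
move=> sC; have : `|f s| <= \sum_(t in C) `|f t|.
  by rewrite (bigD1 s) //= lerDl sumr_ge0.
have := ler_norm (f s); have : 0 <= (cone_rank s)%:R :> R by [].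
rewrite /raised; lra.
Qed.

Lemma depth_pos v : [set v] \in C -> v != r -> (0 < depth v)%N.
Proof. by move=> vC vr; have [_ _ <-] := parentP HC rC conC vC vr. Qed.

Lemma cone_baseP s : s \in cone_base C ->
  [\/ s = set0, exists2 v, s = [set v] & [set v] \in C | #|s| = 2%N /\ s \in C].
Proof.
rewrite in_cone_base => /orP[/eqP -> | sC]; first by constructor 1.
have := C_small sC; rewrite leq_eqVlt ltnS leq_eqVlt ltnS leqn0 cards_eq0.
rewrite (negbTE (complex_neq0 HC sC)) orbF => /orP[/eqP s2 | /cards1P[v sv]].
  by constructor 3.
by constructor 2; exists v; rewrite // -sv.
Qed.

Lemma no_facet_above_edge s t : #|s| = 2%N -> t \in cone_base C -> ~~ is_facet s t.
Proof.
move=> s2; rewrite in_cone_base => /orP[/eqP -> | tC]; first by rewrite facet_set0F.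
by apply/negP => /facet_card ts; have := C_small tC; rewrite ts s2.
Qed.

Lemma discrete_morse_raised : discrete_morse (cone_base C) raised.
Proof.
move=> s /cone_baseP[-> | [v -> vC] | [s2 sC]]; split; apply/card_le1_eqP.
- suff up t : t \in [set t in cone_base C | is_facet set0 t & raised t <= raised set0] ->
    t = [set r] by move=> t u /up -> /up ->.
  rewrite in_set => /and3P[tB /facet_set0[v tv]]; rewrite tv raised_le rank1 rank0 => le.
  apply/congr1/eqP; apply: contraLR le => vr; rewrite -ltnNge; move: tB.
  by rewrite tv in_cone_base (negbTE (set1_neq0 v)) /= => /depth_pos/(_ vr); lia.
- by move=> t u; rewrite in_set facet_set0F /= andbF.
- suff up t : t \in [set t in cone_base C | is_facet [set v] t & raised t <= raised [set v]] ->
    t = tree_edge v by move=> t u /up -> /up ->.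
  rewrite in_set raised_le rank1 => /and3P[tB /facet_from_set1[vt t2]].
  have [/imsetP[x xV tx] | tT] := boolP (t \in tree_edges); last first.
    by rewrite rank_other_edge //; have := height_ge vt; lia.
  rewrite tx rank_tree_edge //; move: vt; rewrite tx /tree_edge !inE => /orP[/eqP vpx | /eqP -> //].
  by have [_ _] := tree_edgeP xV; rewrite -vpx; lia.
- suff dn t : t \in [set t in cone_base C | is_facet t [set v] & raised [set v] <= raised t] ->
    t = set0 by move=> t u /dn -> /dn ->.
  by rewrite in_set => /and3P[_ /facet_set1].
- by move=> t u; rewrite in_set => /and3P[tB st]; have := no_facet_above_edge s2 tB; rewrite st.
- have [/imsetP[x xV sx] | sT] := boolP (s \in tree_edges); last first.
    move=> t u; rewrite in_set raised_le rank_other_edge // => /and3P[_ /(facet_pair s2)[w ws ->]].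
    by rewrite rank1; have := height_ge ws; lia.
  suff dn t : t \in [set t in cone_base C | is_facet t s & raised s <= raised t] ->
    t = [set x] by move=> t u /dn -> /dn ->.
  rewrite in_set raised_le sx rank_tree_edge // => /and3P[_ /(facet_pair (card_tree_edge xV))].
  case=> w + ->; rewrite rank1 /tree_edge !inE => /orP[/eqP -> | /eqP -> //].
  by have [_ _] := tree_edgeP xV; lia.
Qed.

Lemma unpaired_raised s : s \in cone_base C ->
  unpaired (cone_base C) raised s = (#|s| == 2%N) && (s \notin tree_edges).
Proof.
have base0 : set0 \in cone_base C by rewrite in_cone_base eqxx.
case/cone_baseP => [-> | [v -> vC] | [s2 sC]].
- rewrite cards0 /=; apply/negP => /andP[/forall_inP/(_ _ (in_cone_base_C rC)) + _].
  by rewrite /is_facet sub0set cards0 cards1 raised_lt rank1 rank0 depth_root.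
- rewrite cards1 /=; apply/negP => /andP[/forall_inP up /forall_inP dn].
  have [vr | vr] := eqVneq v r.
    have := dn _ base0; rewrite /is_facet sub0set cards0 cards1 raised_lt.
    by rewrite rank1 rank0 vr depth_root.
  have vV : v \in verts C :\ r by rewrite !inE vr.
  have [tC _ _] := tree_edgeP vV.
  have := up _ (in_cone_base_C tC); rewrite /is_facet sub1set !inE eqxx orbT.
  by rewrite card_tree_edge // cards1 raised_lt rank1 rank_tree_edge // ltnn.
rewrite s2 eqxx /=; have [/imsetP[x xV sx] | sT] := boolP (s \in tree_edges).
  apply/negP => /andP[_ /forall_inP/(_ [set x])].
  rewrite in_cone_base_C ?(in_verts_r xV).1 // => /(_ isT).
  rewrite /is_facet sx card_tree_edge // cards1 sub1set !inE eqxx orbT raised_lt.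
  by rewrite rank1 rank_tree_edge // ltnn.
apply/andP; split; apply/forall_inP => t tB; apply/implyP => st.
  by have := no_facet_above_edge s2 tB; rewrite st.
have [u us ->] := facet_pair s2 st; rewrite raised_lt rank1 rank_other_edge //.
by have := height_ge us; lia.
Qed.

Local Notation K := (cone_glue A C).
Local Notation F := (cone_ext f raised).

Lemma drops_raisedF s : (s \in C) && (raised s <= f s) = false.
Proof. by apply/andP => -[/f_lt_raised]; rewrite ltNge => /negbTE ->. Qed.

Lemma critical_cone_raised s : s \in cone_base C ->
  critical K F (cone_simplex s) = (#|s| == 2%N) && (s \notin tree_edges).
Proof.
move=> sB; rewrite criticalE cone_in_cone_glue sB unpaired_cone //; last first.
- exact: sub_split_C HI.
- exact: set0_notin_split_l HA.
by rewrite unpaired_raised // drops_raisedF andbT.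
Qed.

Lemma card_critical_cone_raised p :
  #|[set s in cone_base C | critical K F (cone_simplex s) & #|s| == p]| = (p == 2)%N.
Proof.
have [-> | p2] := eqVneq p 2%N; last first.
  apply/eqP; rewrite cards_eq0; apply/eqP/setP => s; rewrite in_set in_set0.
  apply/negP => /and3P[sB]; rewrite critical_cone_raised // => /andP[/eqP -> _].
  by rewrite eq_sym (negbTE p2).
have -> : [set s in cone_base C | critical K F (cone_simplex s) & #|s| == 2%N] =
          cells C 1 :\: tree_edges.
  apply/setP => s; rewrite in_set in_setD [s \in cells C 1]inE.
  apply/and3P/and3P => [[sB] | [sT sC s2]].
    rewrite critical_cone_raised // => /andP[s2 sT] _; split=> //.
    by move: sB; rewrite in_cone_base => /orP[/eqP s0 | //]; rewrite s0 cards0 in s2.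
  by split; rewrite ?in_cone_base_C ?critical_cone_raised ?in_cone_base_C // s2.
have tree_edges_sub : tree_edges \subset cells C 1.
  apply/subsetP => _ /imsetP[x xV ->].
  by rewrite inE card_tree_edge // eqxx andbT; case: (tree_edgeP xV).
rewrite cardsD (setIidPr tree_edges_sub) card_edges_curve //.
rewrite card_in_imset; last exact: tree_edge_inj.
by rewrite [#|verts C|](cardsD1 r) [r \in verts C]inE rC addnK.
Qed.

Lemma not_critical_C s : s \in C -> ~~ critical M f s.
Proof.
move=> sC; have [t tA st] := C_paired_A sC; rewrite criticalE negb_and orbC.
by rewrite (paired_unpairedF (subsetP (sub_split_l HA) t tA) st).
Qed.

Lemma perfect_cone_raised gen :
  (forall s, critical M f s -> #|s| = 1%N -> s \in A) ->
  #|[set s in A | critical M f s & #|s| == 2%N]| = (2 * gen)%N ->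
  (forall s, critical M f s -> #|s| = 3%N -> s \in B :\: C) ->
  ncrit M f 0 = 1%N ->
  perfect_cone_extension M A C f gen F.
Proof.
move=> crit_vertex crit_edges crit_triangle ncrit0; apply: perfect_cone_ext => //.
have C_drops s : s \in C -> unpaired A f s -> raised s <= f s.
  by move=> sC; have [t tA st] := C_paired_A sC; rewrite (negbTE (paired_unpairedF tA st)).
have ncritE p := ncrit_cone_glue p (critical_lift_split HA HB HU HI C_drops).
have crit_AC p : #|[set s in A :\: C | critical M f s & #|s| == p.+1]| =
                 #|[set s in A | critical M f s & #|s| == p.+1]|.
  congr #|pred_of_set _|; apply/setP => s; rewrite [LHS]in_set [RHS]in_set in_setD.
  apply/and3P/and3P => [[/andP[_ sA] -> ->] // | [sA cs ->]]; rewrite cs sA andbT.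
  by split=> //; apply: contraTN cs; apply: not_critical_C.
split; rewrite ?ncritE ?card_critical_cone_raised /= ?addn0 ?addn1.
- apply: discrete_morse_cone_glue.
  + exact: set0_notin_split_l HA.
  + exact: discrete_morse_sub (sub_split_l HA) dmM.
  + exact: discrete_morse_raised.
  + by move=> s t; rewrite drops_raisedF.
  + by move=> s t; rewrite drops_raisedF.
- rewrite (@card_crit_inside _ _ M A C f 0) // => s cs s1.
  by rewrite in_setD crit_vertex // andbT; apply: contraTN cs; apply: not_critical_C.
- by rewrite crit_AC.
- by rewrite (card_crit_outside HI) // => s cs /(crit_triangle s cs); rewrite in_setD => /andP[].
Qed.

End TreeSide.

Unset Implicit Arguments. Set Strict Implicit. Set Printing Implicit Defensive.

Theorem theorem4p4 (R : realFieldType) (T : finType)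
  (M A1 A2 C : {set {set T}}) (gM g1 g2 : nat) (f : {set T} -> R) :
  surface_of_genus M gM ->
  is_subcomplex A1 M -> is_subcomplex A2 M ->
  A1 :|: A2 = M -> A1 :&: A2 = C ->
  simple_closed_curve C ->
  surface_of_genus (cone_glue A1 C) g1 ->
  surface_of_genus (cone_glue A2 C) g2 ->
  perfect_surface M gM f ->
  (forall s, critical M f s -> #|s| = 1%N -> s \in A1) ->
  #|[set s in A1 | critical M f s & #|s| == 2%N]| = (2 * g1)%N ->
  #|[set s in A2 :\: C | critical M f s & #|s| == 2%N]| = (2 * g2)%N ->
  (forall s, critical M f s -> #|s| = 3%N -> s \in A2 :\: C) ->
  (forall s, s \in C -> exists2 t, t \in A1 &
     ((s, t) \in gradient M f) || ((t, s) \in gradient M f)) ->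
  exists (f1 f2 : {set option T} -> R),
    perfect_surface (cone_glue A1 C) g1 f1 /\
    [/\ perfect_surface (cone_glue A2 C) g2 f2,
        (forall s, s \in A1 -> f1 (lift_simplex s) = f s),
        (forall s, s \in A2 -> f2 (lift_simplex s) = f s),
        (forall s t, (s, t) \in gradient M f -> s \in A1 -> t \in A1 ->
           (lift_simplex s, lift_simplex t) \in gradient (cone_glue A1 C) f1)
      & (forall s t, (s, t) \in gradient M f -> s \in A2 -> t \in A2 ->
           (lift_simplex s, lift_simplex t) \in gradient (cone_glue A2 C) f2)].
Proof.
move=> _ HA1 HA2 HU HI curveC _ _ [dmM ncrit0 _ ncrit2] crit_vertex crit_edges1 crit_edges2
  crit_triangle C_paired_A1.
have [r rC] := curve_vertex curveC.
have [HC _ _ _ _] := curveC.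
have [f1 ext1] : exists f1, perfect_cone_extension M A1 C f g1 f1.
  by eexists; apply: (perfect_cone_raised HA1 HA2 HU HI dmM curveC rC).
have [f2 ext2] : exists f2, perfect_cone_extension M A2 C f g2 f2.
  eexists; apply: (perfect_cone_lowered HA2 HA1 _ _ dmM HC) => //.
  - by rewrite setUC.
  - by rewrite setIC.
case: ext1 ext2 => [perf1 agree1 grad1] [perf2 agree2 grad2].
by exists f1, f2; split.
Qed.
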